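(* There is a formula $\phi_{sm}(O_{id},g_{id},t_s,t_f)$ of the language $\mathcal{L}_{mo}$ such that, for every database instance with a MOFT $\mathcal{M}$ and a PIA $\mathcal{P}$ stored as described in the context, the set of tuples satisfying $\phi_{sm}$ is exactly the SM-MOFT $\mathcal{M}^{sm}$ of $\mathcal{M}$ with respect to $\mathcal{P}$.
   Context: Trajectories and stops: a trajectory is a list $\langle (t_0,x_0,y_0),\dots,(t_n,x_n,y_n)\rangle$ of points of $\mathbb{R}^3$ with $t_0<\dots<t_n$. A place of interest (PoI) is a pair $C=(R_C,\Delta_C)$ with $R_C\subseteq\mathbb{R}^2$ a topologically closed polygon, polyline or point and $\Delta_C>0$ real (minimum duration); a PIA is a finite set $\mathcal{P}=\{C_1,\dots,C_N\}$ of PoIs with mutually disjoint geometries. A stop of $T$ w.r.t. $\mathcal{P}$ is a maximal contiguous subtrajectory $\langle (t_i,x_i,y_i),\dots,(t_{i+\ell},x_{i+\ell},y_{i+\ell})\rangle$ such that for some $k$, all $(x_{i+j},y_{i+j})\in R_{C_k}$ ($j=0,\dots,\ell$) and $t_{i+\ell}-t_i>\Delta_{C_k}$; it is a stop in $C_k$ with stop interval $[t_i,t_{i+\ell}]$. A MOFT $\mathcal{M}$ is a finite relation with schema $(O_{id},T,X,Y)$; for each identifier $O_{id}$ its tuples, ordered by time, form a trajectory (with rational coordinates). The SM-MOFT $\mathcal{M}^{sm}$ of $\mathcal{M}$ w.r.t. $\mathcal{P}$ is the set of tuples $(O_{id},g_{id},t_s,t_f)$ such that $O_{id}$ is the identifier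 of a trajectory in $\mathcal{M}$, $g_{id}$ is the identifier of the geometry of a PoI $C_k\in\mathcal{P}$, and the trajectory of $O_{id}$ has a stop in $C_k$ with stop interval $[t_s,t_f]$. Storage of the PIA: the geometries of the PoIs are the geometric elements of a GIS layer $L_{PoI}$, with a rollup relation $r_{L_{PoI}}^{Pt\to G}(x,y,g)$ stating that point $(x,y)$ lies in the geometry with identifier $g$ (given by linear constraints with rational coefficients); in the OLAP part the PoIs are elements $p_{id}$ of the bottom level $PoI_b$ of PoI dimensions $D$, with a relation $\alpha_{L_{PoI},D}^{PoI_b\to G}(p_{id})=g_{id}$ linking each PoI to its geometry identifier, and the minimum duration $\Delta$ of a PoI is stored as an attribute of $PoI_b$, accessed by an attribute function $\beta_{D}^{PoI_b\to \mathrm{duration}}$. The language $\mathcal{L}_{mo}$: multi-sorted first-order logic with real variables (ranging over $\mathbb{R}$), name variables (object identifiers), geometric identifier variables and dimension-level variables; atomic formulas use OLAP rollup functions $f_{D}^{A\to B}$, GIS rollup relations $r_{L}^{G_i\to G_j}$, relations $\alpha_{L,D}^{A\to G}$, attribute functions $\beta_{D}^{A\to B}$, alpha-numeric functions/relations/constants of the OLAP part, a 4-ary relation symbol for each MOFT, $+,\times,0,1,<$ on reals, and equality on all sorts; formulas are closed under Boolean connectives and quantification over all sorts, with standard semantics. *)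

From Stdlib Require Import Reals QArith Qreals List.
Open Scope R_scope.

Definition lin_constraint := (Q * Q * Q)%type.

Definition sat_constraint (c : lin_constraint) (x y : R) : Prop :=
  let '(a, b, d) := c in Q2R a * x + Q2R b * y <= Q2R d.

Record instance : Type := {
  Name : Type;
  Geo  : Type;
  PoI  : Type;
  moft : list (Name * R * R * R);             (* the MOFT M(Oid,T,X,Y) *)
  geos : list Geo;
  (* geometry of g: finite union of polyhedra given by rational linear
     constraints (disjunctive normal form) *)
  region : Geo -> list (list lin_constraint);
  pois : list PoI;
  alpha : PoI -> Geo;
  duration : PoI -> R
}.

Definition is_rational (r : R) : Prop := exists q : Q, r = Q2R q.

Definition in_region (I : instance) (g : Geo I) (x y : R) : Prop :=
  exists cs, In cs (region I g) /\ forall c, In c cs -> sat_constraint c x y.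

Definition rollup (I : instance) (x y : R) (g : Geo I) : Prop :=
  In g (geos I) /\ in_region I g x y.

Definition alpha_rel (I : instance) (p : PoI I) (g : Geo I) : Prop :=
  In p (pois I) /\ alpha I p = g.

Definition wf_instance (I : instance) : Prop :=
  (forall o t x y, In (o, t, x, y) (moft I) ->
      is_rational t /\ is_rational x /\ is_rational y) /\
  (* MOFT: for each object, tuples ordered by time form a trajectory
     (strictly increasing times, so one position per instant) *)
  (forall o t x y x' y', In (o, t, x, y) (moft I) -> In (o, t, x', y') (moft I) ->
      x = x' /\ y = y') /\
  (forall g, In g (geos I) <-> exists p, In p (pois I) /\ alpha I p = g) /\
  (forall p p', In p (pois I) -> In p' (pois I) -> alpha I p = alpha I p' -> p = p') /\
  (forall g g' x y, In g (geos I) -> In g' (geos I) -> g <> g' ->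
      in_region I g x y -> in_region I g' x y -> False) /\
  (forall p, In p (pois I) -> 0 < duration I p).

Definition pt_t (p : R * R * R) : R := fst (fst p).
Definition pt_x (p : R * R * R) : R := snd (fst p).
Definition pt_y (p : R * R * R) : R := snd p.

Definition is_trajectory_of (I : instance) (o : Name I) (tr : list (R * R * R)) : Prop :=
  (forall t x y, In (t, x, y) tr <-> In (o, t, x, y) (moft I)) /\
  (forall i, (S i < length tr)%nat ->
      pt_t (nth i tr (0, 0, 0)) < pt_t (nth (S i) tr (0, 0, 0))).

Definition stop_cond (I : instance) (tr : list (R * R * R)) (p : PoI I) (i l : nat) : Prop :=
  In p (pois I) /\
  (i + l < length tr)%nat /\
  (forall j, (j <= l)%nat ->
      let q := nth (i + j) tr (0, 0, 0) in in_region I (alpha I p) (pt_x q) (pt_y q)) /\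
  pt_t (nth (i + l) tr (0, 0, 0)) - pt_t (nth i tr (0, 0, 0)) > duration I p.

Definition stop_in (I : instance) (tr : list (R * R * R)) (p : PoI I) (ts tf : R) : Prop :=
  exists i l,
    stop_cond I tr p i l /\
    (forall i' l', (i' <= i)%nat -> (i + l <= i' + l')%nat ->
        (exists p', stop_cond I tr p' i' l') -> i' = i /\ l' = l) /\
    ts = pt_t (nth i tr (0, 0, 0)) /\ tf = pt_t (nth (i + l) tr (0, 0, 0)).

Definition in_SM_MOFT (I : instance) (o : Name I) (g : Geo I) (ts tf : R) : Prop :=
  exists tr, is_trajectory_of I o tr /\ tr <> nil /\
    exists p, In p (pois I) /\ alpha I p = g /\ stop_in I tr p ts tf.

Inductive sort := SReal | SName | SGeo | SPoI.

Inductive rterm :=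
| RVar : nat -> rterm
| RZero : rterm
| ROne : rterm
| RPlus : rterm -> rterm -> rterm
| RMult : rterm -> rterm -> rterm
| RBeta : nat -> rterm.

Inductive form :=
| FMoft  : nat -> rterm -> rterm -> rterm -> form
| FRollup : rterm -> rterm -> nat -> form
| FAlpha : nat -> nat -> form
| FLt    : rterm -> rterm -> form
| FEqR   : rterm -> rterm -> form
| FEqN   : nat -> nat -> form
| FEqG   : nat -> nat -> form
| FEqP   : nat -> nat -> form
| FTrue  : form
| FNot   : form -> form
| FAnd   : form -> form -> form
| FOr    : form -> form -> form
| FImp   : form -> form -> form
| FEx    : sort -> nat -> form -> form
| FAll   : sort -> nat -> form -> form.

Record env (I : instance) : Type := {
  eR : nat -> R;
  eN : nat -> Name I;
  eG : nat -> Geo I;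
  eP : nat -> PoI I
}.
Arguments eR {I}. Arguments eN {I}. Arguments eG {I}. Arguments eP {I}.

Definition upd {A : Type} (f : nat -> A) (n : nat) (a : A) : nat -> A :=
  fun m => if Nat.eqb m n then a else f m.

Definition sort_dom (I : instance) (s : sort) : Type :=
  match s with SReal => R | SName => Name I | SGeo => Geo I | SPoI => PoI I end.

Definition env_upd (I : instance) (rho : env I) (s : sort) (n : nat) :
    sort_dom I s -> env I :=
  match s with
  | SReal => fun a => Build_env I (upd (eR rho) n a) (eN rho) (eG rho) (eP rho)
  | SName => fun a => Build_env I (eR rho) (upd (eN rho) n a) (eG rho) (eP rho)
  | SGeo  => fun a => Build_env I (eR rho) (eN rho) (upd (eG rho) n a) (eP rho)
  | SPoI  => fun a => Build_env I (eR rho) (eN rho) (eG rho) (upd (eP rho) n a)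
  end.

Fixpoint eval_r (I : instance) (rho : env I) (t : rterm) : R :=
  match t with
  | RVar n => eR rho n
  | RZero => 0
  | ROne => 1
  | RPlus a b => eval_r I rho a + eval_r I rho b
  | RMult a b => eval_r I rho a * eval_r I rho b
  | RBeta n => duration I (eP rho n)
  end.

Fixpoint sat (I : instance) (rho : env I) (f : form) : Prop :=
  match f with
  | FMoft o t x y => In (eN rho o, eval_r I rho t, eval_r I rho x, eval_r I rho y) (moft I)
  | FRollup x y g => rollup I (eval_r I rho x) (eval_r I rho y) (eG rho g)
  | FAlpha p g => alpha_rel I (eP rho p) (eG rho g)
  | FLt a b => eval_r I rho a < eval_r I rho b
  | FEqR a b => eval_r I rho a = eval_r I rho b
  | FEqN a b => eN rho a = eN rho b
  | FEqG a b => eG rho a = eG rho b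
  | FEqP a b => eP rho a = eP rho b
  | FTrue => True
  | FNot g => ~ sat I rho g
  | FAnd g h => sat I rho g /\ sat I rho h
  | FOr g h => sat I rho g \/ sat I rho h
  | FImp g h => sat I rho g -> sat I rho h
  | FEx s n g => exists a : sort_dom I s, sat I (env_upd I rho s n a) g
  | FAll s n g => forall a : sort_dom I s, sat I (env_upd I rho s n a) g
  end.

(* The formula says: there is a PoI p whose geometry is g_id, the object is
   observed at t_s and at t_f, every observation between them lies in g_id,
   t_f - t_s exceeds the minimum duration of p, and no other such interval
   (for any PoI) contains [t_s, t_f].  Since a trajectory lists the
   observations in strictly increasing time order, intervals of observation
   times correspond exactly to contiguous subtrajectories, and containment of
   intervals to containment of index ranges; so this is the stop condition
   with its maximality, read off the MOFT by first-order quantification. *)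

From Stdlib Require Import Reals QArith Qreals List Lra Lia Classical Sorting.Sorted.
Open Scope R_scope.

(* Variable conventions: the object is name variable 0; the stop interval is
   real variables 0, 1 and a competing interval real variables 5, 6; real
   variables 2, 3, 4 are bound locally for observations (t, x, y). *)
Definition phi_observed_at (r : nat) : form :=
  FEx SReal 2 (FEx SReal 3 (FMoft 0 (RVar r) (RVar 2) (RVar 3))).

Definition phi_le (r s : nat) : form := FNot (FLt (RVar s) (RVar r)).

Definition phi_inside_between (lo hi g : nat) : form :=
  FAll SReal 4 (FAll SReal 2 (FAll SReal 3
    (FImp (FMoft 0 (RVar 4) (RVar 2) (RVar 3))
      (FImp (phi_le lo 4) (FImp (phi_le 4 hi) (FRollup (RVar 2) (RVar 3) g)))))).

Definition phi_stop (lo hi p g : nat) : form :=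
  FAnd (FAlpha p g) (FAnd (phi_observed_at lo) (FAnd (phi_observed_at hi)
    (FAnd (phi_inside_between lo hi g) (FLt (RPlus (RBeta p) (RVar lo)) (RVar hi))))).

Definition phi_sm : form :=
  FEx SPoI 0 (FAnd (phi_stop 0 1 0 0)
    (FAll SReal 5 (FAll SReal 6 (FAll SPoI 1 (FAll SGeo 1
      (FImp (FAnd (phi_le 5 0) (FAnd (phi_le 1 6) (phi_stop 5 6 1 1)))
        (FAnd (FEqR (RVar 5) (RVar 0)) (FEqR (RVar 6) (RVar 1))))))))).

Definition moft_stop (I : instance) (o : Name I) (g : Geo I) (p : PoI I) (ts tf : R) : Prop :=
  alpha_rel I p g /\
  (exists x y, In (o, ts, x, y) (moft I)) /\
  (exists x y, In (o, tf, x, y) (moft I)) /\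
  (forall t x y, In (o, t, x, y) (moft I) -> ~ t < ts -> ~ tf < t -> rollup I x y g) /\
  duration I p + ts < tf.

Definition maximal_moft_stop (I : instance) (o : Name I) (g : Geo I) (ts tf : R) : Prop :=
  exists p, moft_stop I o g p ts tf /\
    forall a b (p' : PoI I) (g' : Geo I),
      ~ ts < a /\ ~ b < tf /\ moft_stop I o g' p' a b -> a = ts /\ b = tf.

Lemma sat_phi_sm (I : instance) (rho : env I) :
  sat I rho phi_sm <-> maximal_moft_stop I (eN rho 0) (eG rho 0) (eR rho 0) (eR rho 1).
Proof. reflexivity. Qed.

Definition incr_upto (u : nat -> R) (n : nat) : Prop :=
  forall i, (S i < n)%nat -> u i < u (S i).

Section IncreasingUpTo.

Variables (u : nat -> R) (n : nat).
Hypothesis u_incr : incr_upto u n.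

Lemma incr_upto_lt i j : (i < j)%nat -> (j < n)%nat -> u i < u j.
Proof.
  induction 1 as [|j _ IH]; intros Hj.
  - apply u_incr; lia.
  - apply Rlt_trans with (u j); [apply IH; lia | apply u_incr; lia].
Qed.

Lemma incr_upto_le i j : (i <= j)%nat -> (j < n)%nat -> u i <= u j.
Proof.
  intros Hij Hj; destruct (Nat.eq_dec i j) as [->|Hne]; [lra|].
  left; apply incr_upto_lt; lia.
Qed.

Lemma incr_upto_le_inv i j : (i < n)%nat -> u i <= u j -> (i <= j)%nat.
Proof.
  intros Hi Hle; destruct (Nat.le_gt_cases i j) as [|Hji]; [assumption|].
  pose proof (incr_upto_lt j i Hji Hi); lra.
Qed.

Lemma incr_upto_lt_inv i j : (i < n)%nat -> u i < u j -> (i < j)%nat.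
Proof.
  intros Hi Hlt; destruct (Nat.le_gt_cases j i) as [Hji|]; [|assumption].
  pose proof (incr_upto_le j i Hji Hi); lra.
Qed.

Lemma incr_upto_inj i j : (i < n)%nat -> (j < n)%nat -> u i = u j -> i = j.
Proof.
  intros Hi Hj E.
  pose proof (incr_upto_le_inv i j Hi (Req_le _ _ E)).
  pose proof (incr_upto_le_inv j i Hj (Req_le _ _ (eq_sym E))).
  lia.
Qed.

End IncreasingUpTo.

Section InsertByKey.

Variables (A : Type) (key : A -> R).

Definition key_lt (a b : A) : Prop := key a < key b.

(* An element whose key is already present is dropped. *)
Fixpoint insert_key (a : A) (l : list A) : list A :=
  match l with
  | nil => a :: nil
  | b :: l' =>
      if Rlt_dec (key a) (key b) then a :: l
      else if Rlt_dec (key b) (key a) then b :: insert_key a l'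
      else l
  end.

Lemma in_insert_key a l z :
  (forall b, In b l -> key b = key a -> b = a) ->
  In z (insert_key a l) <-> a = z \/ In z l.
Proof.
  induction l as [|b l IH]; intros Hkey; simpl; [tauto|].
  destruct (Rlt_dec (key a) (key b)); [simpl; tauto|].
  destruct (Rlt_dec (key b) (key a)).
  - simpl; rewrite IH by (intros c Hc; apply Hkey; simpl; auto); tauto.
  - assert (b = a) as -> by (apply Hkey; simpl; auto; lra).
    simpl; intuition congruence.
Qed.

Lemma insert_key_sorted a l :
  (forall b, In b l -> key b = key a -> b = a) ->
  StronglySorted key_lt l -> StronglySorted key_lt (insert_key a l).
Proof.
  induction l as [|b l IH]; intros Hkey Hs; simpl.
  - repeat constructor.
  - inversion Hs as [|? ? Hs' Hb]; subst.
    destruct (Rlt_dec (key a) (key b)) as [Hab|].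
    + constructor; [exact Hs|].
      constructor; [exact Hab|].
      eapply Forall_impl; [|exact Hb]; unfold key_lt; intros c Hc; lra.
    + destruct (Rlt_dec (key b) (key a)) as [Hba|]; [|exact Hs].
      assert (Hkey' : forall c, In c l -> key c = key a -> c = a)
        by (intros c Hc; apply Hkey; simpl; auto).
      constructor; [now apply IH|].
      apply Forall_forall; intros c Hc.
      apply (in_insert_key _ _ _ Hkey') in Hc as [<-|Hc]; [exact Hba|].
      exact (proj1 (Forall_forall _ _) Hb c Hc).
Qed.

Lemma strongly_sorted_incr_upto (l : list A) (d : A) :
  StronglySorted key_lt l -> incr_upto (fun i => key (nth i l d)) (length l).
Proof.
  induction l as [|a l IH]; intros Hs i Hi; simpl in Hi; [lia|].
  inversion Hs as [|? ? Hs' Ha]; subst.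
  destruct i as [|i].
  - destruct l as [|b l]; [simpl in Hi; lia|].
    inversion Ha; assumption.
  - apply (IH Hs'); lia.
Qed.

End InsertByKey.

Arguments key_lt {A} key a b.
Arguments insert_key {A} key a l.

Lemma sorted_observations_exist {N : Type} (M : list (N * R * R * R)) (o : N) :
  (forall t x y x' y', In (o, t, x, y) M -> In (o, t, x', y') M -> x = x' /\ y = y') ->
  exists tr, (forall t x y, In (t, x, y) tr <-> In (o, t, x, y) M) /\
             StronglySorted (key_lt pt_t) tr.
Proof.
  induction M as [|[[[o' t'] x'] y'] M IH]; intros Hfun.
  - exists nil; split; [simpl; tauto | constructor].
  - destruct IH as [tr [Htr Hs]].
    { intros t x y x1 y1 H H1; apply (Hfun t x y x1 y1); simpl; auto. }
    destruct (classic (o' = o)) as [->|Hne].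
    + assert (Hkey : forall b, In b tr -> pt_t b = t' -> b = (t', x', y')).
      { intros [[t x] y] Hb Et; unfold pt_t in Et; simpl in Et; subst t.
        apply Htr in Hb.
        destruct (Hfun t' x y x' y') as [-> ->]; simpl; auto. }
      exists (insert_key pt_t (t', x', y') tr); split.
      * intros t x y; rewrite (in_insert_key _ pt_t (t', x', y') tr _ Hkey), Htr; simpl.
        intuition congruence.
      * now apply insert_key_sorted.
    + exists tr; split; [|exact Hs].
      intros t x y; rewrite Htr; simpl; intuition congruence.
Qed.

Lemma trajectory_exists (I : instance) (o : Name I) :
  wf_instance I -> exists tr, is_trajectory_of I o tr.
Proof.
  intros (_ & Hfun & _).
  destruct (sorted_observations_exist (moft I) o (fun t x y x' y' => Hfun o t x y x' y'))
    as [tr [Htr Hs]].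
  exists tr; split; [exact Htr|].
  exact (strongly_sorted_incr_upto _ pt_t tr (0, 0, 0) Hs).
Qed.

Definition time_at (tr : list (R * R * R)) (k : nat) : R := pt_t (nth k tr (0, 0, 0)).

Section Trajectory.

Variables (I : instance) (o : Name I) (tr : list (R * R * R)).
Hypothesis W : wf_instance I.
Hypothesis Htr : is_trajectory_of I o tr.

Let tr_incr : incr_upto (time_at tr) (length tr) := proj2 Htr.

Lemma trajectory_point k : (k < length tr)%nat ->
  let q := nth k tr (0, 0, 0) in In (o, pt_t q, pt_x q, pt_y q) (moft I).
Proof.
  intros Hk; apply (proj1 Htr).
  pose proof (nth_In tr (0, 0, 0) Hk) as Hq.
  destruct (nth k tr (0, 0, 0)) as [[t x] y]; exact Hq.
Qed.

Lemma trajectory_index t x y : In (o, t, x, y) (moft I) ->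
  exists k, (k < length tr)%nat /\ nth k tr (0, 0, 0) = (t, x, y).
Proof.
  intros Hm; apply (proj1 Htr), (In_nth tr _ (0, 0, 0)) in Hm.
  destruct Hm as [k [Hk E]]; eauto.
Qed.

Lemma alpha_in_geos p : In p (pois I) -> In (alpha I p) (geos I).
Proof. destruct W as (_ & _ & Hgeos & _); intros Hp; apply Hgeos; eauto. Qed.

Lemma duration_pos p : In p (pois I) -> 0 < duration I p.
Proof. destruct W as (_ & _ & _ & _ & _ & Hpos); exact (Hpos p). Qed.

Lemma stop_cond_moft_stop p i l : stop_cond I tr p i l ->
  moft_stop I o (alpha I p) p (time_at tr i) (time_at tr (i + l)).
Proof.
  intros (Hp & Hlen & Hreg & Hdur).
  split; [split; auto|split; [|split; [|split]]].
  - do 2 eexists; apply trajectory_point; lia.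
  - do 2 eexists; apply trajectory_point; lia.
  - intros t x y Hm Hge Hle; apply Rnot_lt_le in Hge, Hle.
    destruct (trajectory_index t x y Hm) as [k [Hk Ek]].
    assert (Tk : time_at tr k = t) by (unfold time_at; rewrite Ek; reflexivity).
    assert (i <= k)%nat by (apply (incr_upto_le_inv _ _ tr_incr); [lia | lra]).
    assert (k <= i + l)%nat by (apply (incr_upto_le_inv _ _ tr_incr); [lia | lra]).
    split; [now apply alpha_in_geos|].
    specialize (Hreg (k - i)%nat ltac:(lia)); simpl in Hreg.
    replace (i + (k - i))%nat with k in Hreg by lia.
    rewrite Ek in Hreg; exact Hreg.
  - unfold time_at; lra.
Qed.

Lemma moft_stop_stop_cond g p ts tf : moft_stop I o g p ts tf ->
  g = alpha I p /\
  exists i l, stop_cond I tr p i l /\ ts = time_at tr i /\ tf = time_at tr (i + l).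
Proof.
  intros [[Hp Hal] [[x1 [y1 M1]] [[x2 [y2 M2]] [Hr Hd]]]].
  split; [now symmetry|].
  destruct (trajectory_index _ _ _ M1) as [k1 [Hk1 E1]].
  destruct (trajectory_index _ _ _ M2) as [k2 [Hk2 E2]].
  assert (T1 : time_at tr k1 = ts) by (unfold time_at; rewrite E1; reflexivity).
  assert (T2 : time_at tr k2 = tf) by (unfold time_at; rewrite E2; reflexivity).
  pose proof (duration_pos p Hp).
  assert (k1 < k2)%nat by (apply (incr_upto_lt_inv _ _ tr_incr); [lia | lra]).
  exists k1, (k2 - k1)%nat; unfold stop_cond.
  replace (k1 + (k2 - k1))%nat with k2 by lia.
  split; [|split; congruence].
  split; [exact Hp | split; [lia | split; [|unfold time_at in *; lra]]].
  intros j Hj; cbv zeta.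
  assert (Hk : (k1 + j < length tr)%nat) by lia.
  pose proof (incr_upto_le _ _ tr_incr k1 (k1 + j) ltac:(lia) Hk).
  pose proof (incr_upto_le _ _ tr_incr (k1 + j) k2 ltac:(lia) Hk2).
  subst g; apply (Hr _ _ _ (trajectory_point _ Hk)); unfold time_at in *; lra.
Qed.

Lemma maximal_moft_stop_iff_stop_in g ts tf :
  maximal_moft_stop I o g ts tf <->
  exists p, In p (pois I) /\ alpha I p = g /\ stop_in I tr p ts tf.
Proof.
  split.
  - intros [p [Hstop Hmax]].
    destruct (moft_stop_stop_cond _ _ _ _ Hstop) as [-> [i [l [Hcond [-> ->]]]]].
    exists p; split; [exact (proj1 Hcond) | split; [reflexivity|]].
    exists i, l; split; [exact Hcond | split; [|split; reflexivity]].
    intros i' l' Hi' Hl' [p' Hcond'].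
    assert (Hlen : (i + l < length tr)%nat) by apply Hcond.
    assert (Hlen' : (i' + l' < length tr)%nat) by apply Hcond'.
    pose proof (incr_upto_le _ _ tr_incr i' i Hi' ltac:(lia)).
    pose proof (incr_upto_le _ _ tr_incr (i + l) (i' + l') Hl' Hlen').
    destruct (Hmax (time_at tr i') (time_at tr (i' + l')) p' (alpha I p')) as [Ei El].
    { split; [lra | split; [lra|]]; now apply stop_cond_moft_stop. }
    apply (incr_upto_inj _ _ tr_incr) in Ei, El; lia.
  - intros [p [_ [<- [i [l [Hcond [Hmax [-> ->]]]]]]]].
    exists p; split; [now apply stop_cond_moft_stop|].
    intros a b p' g' (Ha & Hb & Hstop').
    apply Rnot_lt_le in Ha, Hb.
    destruct (moft_stop_stop_cond _ _ _ _ Hstop') as [_ [i' [l' [Hcond' [-> ->]]]]].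
    assert (Hlen : (i + l < length tr)%nat) by apply Hcond.
    assert (Hlen' : (i' + l' < length tr)%nat) by apply Hcond'.
    assert (i' <= i)%nat by (apply (incr_upto_le_inv _ _ tr_incr); [lia | unfold time_at in *; lra]).
    assert (i + l <= i' + l')%nat by (apply (incr_upto_le_inv _ _ tr_incr); [lia | unfold time_at in *; lra]).
    destruct (Hmax i' l') as [-> ->]; eauto.
Qed.

End Trajectory.

Theorem proposition3 :
  exists phi : form,
    forall I : instance, wf_instance I ->
      forall rho : env I,
        sat I rho phi <-> in_SM_MOFT I (eN rho 0) (eG rho 0) (eR rho 0) (eR rho 1).
Proof.
  exists phi_sm; intros I W rho; rewrite sat_phi_sm; split.
  - intros Hphi.
    destruct (trajectory_exists I (eN rho 0) W) as [tr Htr].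
    exists tr; split; [exact Htr | split].
    + destruct Hphi as [p [[_ [[x [y Hm]] _]] _]].
      apply (proj1 Htr) in Hm; intros ->; destruct Hm.
    + now apply (maximal_moft_stop_iff_stop_in I _ tr W Htr).
  - intros [tr [Htr [_ Hstop]]].
    now apply (maximal_moft_stop_iff_stop_in I _ tr W Htr).
Qed.
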